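(* Let $k \ge 1$ be an integer and $t > 0$ a real number with $t \ge k-1$. Let $(n_s)_{s \ge 1}$ be a sequence of nonnegative integers with only finitely many nonzero terms, and set $N_{\mathrm{seen}} = \sum_{s \ge 1} n_s$. Define $$\widehat{N}_{\mathrm{unseen}}(t) = \sum_{s=1}^{k} h_s\, n_s, \qquad h_s = -(-t)^s\, \mathbb{P}\!\left(\mathrm{Bin}\!\left(k, \tfrac{1}{t+1}\right) \ge s\right),$$ where $\mathrm{Bin}(k,p)$ denotes a binomial random variable with $k$ trials and success probability $p$. Then $$\widehat{N}_{\mathrm{unseen}}(t) \le e^{\frac{kt}{t+1}}\, N_{\mathrm{seen}}.$$
   Context: $n_s$ is interpreted as the number of distinct items observed exactly $s$ times in a sample; $\widehat{N}_{\mathrm{unseen}}(t)$ is the smoothed Good–Turing estimator with truncation level $k$ and extrapolation factor $t$. *)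

From HB Require Import structures.
From mathcomp Require Import all_boot all_order all_algebra.
From mathcomp Require Import reals.
From mathcomp Require Import sequences exp.
Set Implicit Arguments. Unset Strict Implicit. Unset Printing Implicit Defensive.
Import Order.TTheory GRing.Theory Num.Theory.
Local Open Scope ring_scope.

Definition binom_tail {R : realType} (k s : nat) (p : R) : R :=
  \sum_(s <= j < k.+1) ('C(k, j))%:R * p ^+ j * (1 - p) ^+ (k - j).

Definition sgt_coef {R : realType} (k : nat) (t : R) (s : nat) : R :=
  - ((- t) ^+ s) * binom_tail k s (t + 1)^-1.

Definition N_unseen {R : realType} (k : nat) (t : R) (n : nat -> nat) : R :=
  \sum_(1 <= s < k.+1) sgt_coef k t s * (n s)%:R.

(* N_seen = sum_{s>=1} n_s, where n_s = 0 for s > M *)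
Definition N_seen {R : realType} (M : nat) (n : nat -> nat) : R :=
  \sum_(1 <= s < M.+1) (n s)%:R.

From HB Require Import structures.
From mathcomp Require Import all_boot all_order all_algebra.
From mathcomp Require Import reals.
From mathcomp Require Import sequences exp.
From mathcomp Require Import zify ring lra.
Import Order.TTheory GRing.Theory Num.Theory.
Local Open Scope ring_scope.

(* With p = 1/(t+1), the tail P(Bin(k,p) >= s) is at most C(k,s) p^s, since
   C(k,j) <= C(k,s) C(k-s,j-s) for j >= s and the remaining factor sums to a full
   Bin(k-s,p) mass.  Hence |h_s| <= C(k,s) (tp)^s, one term of the binomial
   expansion of (1 + tp)^k <= e^(ktp), so every coefficient h_s is at most
   e^(kt/(t+1)). *)

Lemma bin_mul_bin (k s i : nat) : (s + i <= k)%N ->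
  ('C(k, s + i) * 'C(s + i, s) = 'C(k, s) * 'C(k - s, i))%N.
Proof.
move=> sik; have sk : (s <= k)%N by lia.
have ik : (i <= k - s)%N by lia.
have fact_pos : (0 < s`! * i`! * (k - (s + i))`!)%N by rewrite !muln_gt0 !fact_gt0.
apply/eqP; rewrite -(eqn_pmul2r fact_pos); apply/eqP.
have inner := bin_fact (leq_addr i s); rewrite addKn in inner.
have outer := bin_fact sik.
have first := bin_fact sk.
have second := bin_fact ik; rewrite -subnDA in second.
transitivity ('C(k, s + i) * ('C(s + i, s) * (s`! * i`!) * (k - (s + i))`!))%N.
  by rewrite !mulnA.
rewrite inner outer -first -second; ring.
Qed.

Lemma leq_bin_mul_bin (k s i : nat) : (s + i <= k)%N ->
  ('C(k, s + i) <= 'C(k, s) * 'C(k - s, i))%N.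
Proof. by move=> sik; rewrite -bin_mul_bin // leq_pmulr // bin_gt0 leq_addr. Qed.

Section BinomialTail.
Variable R : realType.
Implicit Types p x : R.

Lemma binomial_pmf_sum (m : nat) p :
  \sum_(0 <= i < m.+1) ('C(m, i))%:R * p ^+ i * (1 - p) ^+ (m - i) = 1.
Proof.
rewrite big_mkord -[RHS](expr1n _ m) -[1 in RHS](subrK p (1 : R)) exprDn.
by apply: eq_bigr => i _; rewrite -mulr_natl; ring.
Qed.

Lemma binom_tail_ge0 (k s : nat) p : 0 <= p <= 1 -> 0 <= binom_tail k s p.
Proof.
move=> /andP[p0 p1]; apply: sumr_ge0 => j _.
by rewrite !mulr_ge0 ?exprn_ge0 ?subr_ge0.
Qed.

Lemma binom_tail_le (k s : nat) p : 0 <= p <= 1 -> (s <= k)%N ->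
  binom_tail k s p <= ('C(k, s))%:R * p ^+ s.
Proof.
move=> /andP[p0 p1] sk.
have -> : ('C(k, s))%:R * p ^+ s = ('C(k, s))%:R * p ^+ s *
    \sum_(0 <= i < (k - s).+1) ('C(k - s, i))%:R * p ^+ i * (1 - p) ^+ (k - s - i).
  by rewrite binomial_pmf_sum mulr1.
rewrite /binom_tail -[s in \sum_(s <= _ < _) _]add0n big_addn subSn // mulr_sumr.
apply: ler_sum_nat => i /andP[_ ik]; rewrite ltnS in ik.
have sik : (s + i <= k)%N by lia.
have -> : (k - (i + s) = k - s - i)%N by lia.
have q0 : 0 <= p ^+ s * p ^+ i * (1 - p) ^+ (k - s - i).
  by rewrite !mulr_ge0 ?exprn_ge0 ?subr_ge0.
have bin_le : ('C(k, i + s))%:R <= ('C(k, s))%:R * ('C(k - s, i))%:R :> R.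
  by rewrite -natrM ler_nat addnC leq_bin_mul_bin.
set q := p ^+ s * p ^+ i * (1 - p) ^+ (k - s - i) in q0 *.
rewrite exprD.
have -> : ('C(k, i + s))%:R * (p ^+ i * p ^+ s) * (1 - p) ^+ (k - s - i)
  = ('C(k, i + s))%:R * q :> R by rewrite /q; ring.
have -> : ('C(k, s))%:R * p ^+ s * (('C(k - s, i))%:R * p ^+ i * (1 - p) ^+ (k - s - i))
  = ('C(k, s))%:R * ('C(k - s, i))%:R * q :> R by rewrite /q; ring.
by rewrite ler_wpM2r.
Qed.

Lemma bin_expr_le_expR (k s : nat) x : 0 <= x ->
  ('C(k, s))%:R * x ^+ s <= expR (k%:R * x).
Proof.
move=> x0; case: (leqP s k) => [sk | ks]; last first.
  by rewrite bin_small // mul0r expR_ge0.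
apply: (@le_trans _ _ ((x + 1) ^+ k)).
  rewrite exprD1n (bigD1 (Ordinal (sk : s < k.+1)%N)) //= mulr_natl lerDl.
  by apply: sumr_ge0 => i _; exact: mulrn_wge0 (exprn_ge0 _ x0).
rewrite expRM_natl lerXn2r ?nnegrE ?addr_ge0 ?expR_ge0 //.
by rewrite addrC expR_ge1Dx.
Qed.

End BinomialTail.

Lemma sgt_coef_le_expR {R : realType} (k s : nat) (t : R) : 0 < t ->
  sgt_coef k t s <= expR (k%:R * t / (t + 1)).
Proof.
move=> t0; set p := (t + 1)^-1.
have t1_gt0 : 0 < t + 1 by lra.
have p01 : 0 <= p <= 1 by rewrite invr_ge0 ltW //= invf_le1 //; lra.
have tp0 : 0 <= t * p by rewrite mulr_ge0 ?ltW ?invr_gt0.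
have [sk | ks] := leqP s k; last first.
  by rewrite /sgt_coef /binom_tail big_geq // mulr0 expR_ge0.
rewrite -mulrA -/p.
apply: (@le_trans _ _ (t ^+ s * binom_tail k s p)).
  rewrite ler_wpM2r ?binom_tail_ge0 //.
  by rewrite (le_trans (ler_norm _)) // normrN normrX normrN gtr0_norm.
apply: (@le_trans _ _ (('C(k, s))%:R * (t * p) ^+ s)); last exact: bin_expr_le_expR.
by rewrite exprMn mulrCA ler_wpM2l ?exprn_ge0 ?(ltW t0) ?binom_tail_le.
Qed.

Lemma sum_nat_le_support {R : realType} (a : nat -> R) (k M : nat) :
  (forall s, 0 <= a s) -> (forall s, (M < s)%N -> a s = 0) ->
  \sum_(1 <= s < k.+1) a s <= \sum_(1 <= s < M.+1) a s.
Proof.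
move=> a_ge0 a_supp; set m := maxn k M.
have -> : \sum_(1 <= s < M.+1) a s = \sum_(1 <= s < m.+1) a s.
  have tail0 : \sum_(M.+1 <= s < m.+1) a s = 0.
    by rewrite big_nat big1 // => s /andP[Ms _]; rewrite a_supp.
  by rewrite (@big_cat_nat _ _ _ M.+1 1 m.+1) ?ltnS ?leq_maxr //= tail0 addr0.
rewrite (@big_cat_nat _ _ _ k.+1 1 m.+1) ?ltnS ?leq_maxl //=.
by rewrite lerDl sumr_ge0.
Qed.

Theorem theorem1 (R : realType) (k : nat) (t : R) (n : nat -> nat) (M : nat) :
  (1 <= k)%N -> 0 < t -> (k - 1)%:R <= t ->
  (forall s : nat, (M < s)%N -> n s = 0%N) ->
  N_unseen k t n <= expR (k%:R * t / (t + 1)) * N_seen M n.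
Proof.
move=> _ t0 _ n_supp.
rewrite /N_unseen /N_seen.
apply: (@le_trans _ _ (\sum_(1 <= s < k.+1) expR (k%:R * t / (t + 1)) * (n s)%:R)).
  by apply: ler_sum_nat => s _; rewrite ler_wpM2r ?sgt_coef_le_expR.
rewrite -mulr_sumr ler_wpM2l ?expR_ge0 // sum_nat_le_support // => s Ms.
by rewrite n_supp.
Qed.
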